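(* Let $\Phi$ be a Leonard system in $\mathcal A$ with parameter array $(\theta_i,\theta^*_i,i=0..d;\varphi_j,\phi_j,j=1..d)$ and let $\nu=\mathrm{tr}(E_0E^*_0)^{-1}$. Then $$\nu=\frac{\eta_d(\theta_0)\,\eta^*_d(\theta^*_0)}{\phi_1\phi_2\cdots\phi_d}.$$
   Context: Let $\mathbb K$ be a field, $d\ge 0$ an integer, and $\mathcal A$ a $\mathbb K$-algebra isomorphic to $\mathrm{Mat}_{d+1}(\mathbb K)$, with identity $I$ and trace $\mathrm{tr}$. An element $A\in\mathcal A$ is multiplicity-free if it has $d+1$ mutually distinct eigenvalues in $\mathbb K$; if $\theta_0,\dots,\theta_d$ is an ordering of them, the primitive idempotent of $A$ associated with $\theta_i$ is $E_i=\prod_{j\ne i}(A-\theta_jI)/(\theta_i-\theta_j)$. A Leonard system in $\mathcal A$ is a sequence $\Phi=(A;A^*;\{E_i\}_{i=0}^d;\{E^*_i\}_{i=0}^d)$ such that: (i) $A,A^*$ are multiplicity-free; (ii) $E_0,\dots,E_d$ is an ordering of the primitive idempotents of $A$; (iii) $E^*_0,\dots,E^*_d$ is an ordering of those of $A^*$; (iv) $E_iA^*E_j=0$ if $|i-j|>1$ and $\ne0$ if $|i-j|=1$ $(0\le i,j\le d)$; (v) $E^*_iAE^*_j=0$ if $|i-j|>1$ and $\neq0$ if $|i-j|=1$ $(0\le i,j\le d)$. $\theta_i$ (resp. $\theta^*_i$) is the eigenvalue of $A$ (resp. $A^*$) for $E_i$ (resp. $E^*_i$). One has $\mathrm{tr}(E_0E^*_0)\neq0$.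 It is known that there exist unique nonzero scalars $\varphi_1,\dots,\varphi_d\in\mathbb K$ (first split sequence) such that for some $\mathbb K$-algebra isomorphism $\natural:\mathcal A\to\mathrm{Mat}_{d+1}(\mathbb K)$, $A^\natural$ is lower bidiagonal with diagonal $\theta_0,\dots,\theta_d$ and subdiagonal entries all $1$, and $A^{*\natural}$ is upper bidiagonal with diagonal $\theta^*_0,\dots,\theta^*_d$ and $(A^{*\natural})_{i-1,i}=\varphi_i$. The second split sequence $\phi_1,\dots,\phi_d$ is the first split sequence of $(A;A^*;\{E_{d-i}\}_{i=0}^d;\{E^*_i\}_{i=0}^d)$. Polynomials: $\eta_i=\prod_{h=0}^{i-1}(\lambda-\theta_{d-h})$, $\eta^*_i=\prod_{h=0}^{i-1}(\lambda-\theta^*_{d-h})$. *)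

From mathcomp Require Import all_boot all_order all_algebra.
Set Implicit Arguments. Unset Strict Implicit. Unset Printing Implicit Defensive.
Import Order.TTheory GRing.Theory Num.Theory.
Local Open Scope ring_scope.

(* A K-algebra [A] is identified with Mat_{d+1}(K) through a fixed K-algebra
   isomorphism [f : {lrmorphism A -> 'M[K]_d.+1}] (bijective).  Eigenvalues and
   the trace of elements of [A] are read through [f] (they do not depend on the
   choice of isomorphism). Sequences indexed by 0..d (or 1..d) are [nat -> _];
   only the relevant indices matter. *)

Section LS.
Variables (K : fieldType) (d : nat) (A : algType K).

Definition trA (f : A -> 'M[K]_d.+1) (X : A) : K := \tr (f X).

Definition prim_idem (a : A) (theta : nat -> K) (i : nat) : A :=
  \prod_(j < d.+1 | (j : nat) != i)
     ((theta i - theta j)^-1 *: (a - (theta j)%:A)).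

Definition mf_ordering (f : A -> 'M[K]_d.+1) (a : A) (theta : nat -> K) : Prop :=
  (forall i, (i <= d)%N -> eigenvalue (f a) (theta i)) /\
  (forall i j, (i <= d)%N -> (j <= d)%N -> theta i = theta j -> i = j).

(* Leonard system (A; A*; {E_i}; {E*_i}) where E_i = prim_idem a theta i and
   E*_i = prim_idem as thetas i *)
Definition leonard_system (f : A -> 'M[K]_d.+1) (a as_ : A)
    (theta thetas : nat -> K) : Prop :=
  [/\ mf_ordering f a theta, mf_ordering f as_ thetas,
      (forall i j, (i <= d)%N -> (j <= d)%N ->
         ((i.+1 < j)%N || (j.+1 < i)%N) ->
           prim_idem a theta i * as_ * prim_idem a theta j = 0),
        (forall i j, (i <= d)%N -> (j <= d)%N ->
         ((i.+1 == j) || (j.+1 == i)) ->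
           prim_idem a theta i * as_ * prim_idem a theta j != 0) &
    ((forall i j, (i <= d)%N -> (j <= d)%N ->
         ((i.+1 < j)%N || (j.+1 < i)%N) ->
           prim_idem as_ thetas i * a * prim_idem as_ thetas j = 0) /\
        (forall i j, (i <= d)%N -> (j <= d)%N ->
         ((i.+1 == j) || (j.+1 == i)) ->
           prim_idem as_ thetas i * a * prim_idem as_ thetas j != 0))].

Definition lower_bidiag (theta : nat -> K) : 'M[K]_d.+1 :=
  \matrix_(i, j) (if (i : nat) == j then theta i
                  else if (i : nat) == j.+1 then 1 else 0).

Definition upper_bidiag (thetas phi : nat -> K) : 'M[K]_d.+1 :=
  \matrix_(i, j) (if (i : nat) == j then thetas i
                  else if (j : nat) == i.+1 then phi j else 0).

Definition split_sequence (a as_ : A) (theta thetas phi : nat -> K) : Prop :=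
  (forall j, (1 <= j <= d)%N -> phi j != 0) /\
  exists g : {lrmorphism A -> 'M[K]_d.+1},
    bijective g /\ g a = lower_bidiag theta /\ g as_ = upper_bidiag thetas phi.

Definition eta (theta : nat -> K) (i : nat) (lam : K) : K :=
  \prod_(h < i) (lam - theta (d - h)%N).

End LS.

From mathcomp Require Import all_boot all_order all_algebra zify ring.
Set Implicit Arguments. Unset Strict Implicit. Unset Printing Implicit Defensive.
Import GRing.Theory.
Local Open Scope ring_scope.

(* In the split basis of the statement, [a] is lower bidiagonal with diagonal
   theta_d, ..., theta_0 and [as_] is upper bidiagonal with superdiagonal phi.
   Hence E_0 = prod_(j >= 1) (a - theta_j) / (theta_0 - theta_j) becomes
   eta_d(theta_0)^-1 times a matrix supported on its last row, with entry 1 in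
   column 0 and eta_d(theta_0) on the diagonal, while E*_0 becomes
   eta*_d(theta*_0)^-1 times a matrix supported on its first row, with entry
   phi_1 ... phi_d in the last column.  Two such rank-one matrices satisfy
   E_0 E*_0 E_0 = t E_0 with t = phi_1 ... phi_d / (eta_d(theta_0) eta*_d(theta*_0)),
   and E_0 is an idempotent of trace 1 (a Lagrange projector of the
   diagonalisable matrix a), so tr(E_0 E*_0) = tr(E_0 E*_0 E_0) = t. *)

Section RowSupportedMatrices.
Variable R : comPzRingType.

Definition mx_row_supported m n (X : 'M[R]_(m, n)) (p : 'I_m) :=
  forall i j, i != p -> X i j = 0.

Lemma mx_row_supportedZ m n (X : 'M[R]_(m, n)) p c :
  mx_row_supported X p -> mx_row_supported (c *: X) p.
Proof. by move=> Xp i j ip; rewrite mxE Xp ?mulr0. Qed.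

Lemma mx_row_supported_sandwich n (X Y : 'M[R]_n) p q :
  mx_row_supported X p -> mx_row_supported Y q ->
  X *m Y *m X = (X p q * Y q p) *: X.
Proof.
move=> Xp Yq; apply/matrixP => i j; rewrite [RHS]mxE.
rewrite mxE (bigD1 p) //= big1 => [|k kp]; last by rewrite Xp ?mulr0.
rewrite mxE (bigD1 q) //= big1 => [|k kq]; last by rewrite Yq ?mulr0.
rewrite !addr0; have [-> // | ip] := eqVneq i p.
by rewrite !(Xp i) // !mul0r mulr0.
Qed.

Lemma mx_row_supported_idem n (X : 'M[R]_n) p :
  mx_row_supported X p -> X p p = 1 -> X *m X = X.
Proof.
move=> Xp Xpp; apply/matrixP => i j.
rewrite mxE (bigD1 p) //= big1 => [|k kp]; last by rewrite (Xp k) ?mulr0.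
rewrite addr0; have [-> | ip] := eqVneq i p; first by rewrite Xpp mul1r.
by rewrite !(Xp i) // mul0r.
Qed.

Lemma mxtrace_idem_sandwich n (P Y : 'M[R]_n) t :
  P *m P = P -> P *m Y *m P = t *: P -> \tr (P *m Y) = t * \tr P.
Proof.
by move=> PP PYP; rewrite -{1}PP -mulmxA mxtrace_mulC PYP mxtraceZ.
Qed.
End RowSupportedMatrices.

Section ShiftProducts.
Variables (K : fieldType) (d : nat).
Implicit Types (theta delta phi : nat -> K) (c : K).

Lemma mul_lower_bidiag_shift delta c (M : 'M[K]_d.+1) (i k : 'I_d.+1) :
  ((lower_bidiag d delta - c%:M) *m M) i k =
  (delta i - c) * M i k + (if (0 < i)%N then M (inord i.-1) k else 0).
Proof.
have Lij (j : 'I_d.+1) : (lower_bidiag d delta - c%:M) i j =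
    if i == j then delta i - c else if (i : nat) == j.+1 then 1 else 0.
  by rewrite !mxE val_eqE; case: eqVneq => [->|_]; rewrite ?subr0.
rewrite mxE (bigD1 i) //= Lij eqxx; congr (_ + _).
have [i_gt0 | ] := ltnP 0 i; last first.
  rewrite leqn0 => /eqP i0; rewrite big1 // => j ji; rewrite Lij eq_sym (negbTE ji).
  by rewrite i0 mul0r.
have i1_lt : (i.-1 < d.+1)%N by have := ltn_ord i; lia.
have i1Ni : inord i.-1 != i by apply/eqP => /(congr1 val); rewrite /= inordK //; lia.
rewrite (bigD1 (inord i.-1)) //= Lij eq_sym (negbTE i1Ni) inordK // prednK // eqxx mul1r.
rewrite big1 ?addr0 // => j /andP[ji jNi1]; rewrite Lij eq_sym (negbTE ji).
case: eqP => [ij | _]; last by rewrite mul0r.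
by case/eqP: jNi1; apply/val_inj; rewrite /= inordK // ij.
Qed.

Lemma mul_upper_bidiag_shift delta phi c (M : 'M[K]_d.+1) (i k : 'I_d.+1) :
  ((upper_bidiag d delta phi - c%:M) *m M) i k =
  (delta i - c) * M i k + (if (i < d)%N then phi i.+1 * M (inord i.+1) k else 0).
Proof.
have Uij (j : 'I_d.+1) : (upper_bidiag d delta phi - c%:M) i j =
    if i == j then delta i - c else if (j : nat) == i.+1 then phi j else 0.
  by rewrite !mxE val_eqE; case: eqVneq => [->|_]; rewrite ?subr0.
rewrite mxE (bigD1 i) //= Uij eqxx; congr (_ + _).
have [i_lt | ] := ltnP i d; last first.
  move=> d_le_i; rewrite big1 // => j ji; rewrite Uij eq_sym (negbTE ji).
  by case: eqP => [ji1|]; rewrite ?mul0r //; have := ltn_ord j; lia.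
have i1Ni : inord i.+1 != i by apply/eqP => /(congr1 val); rewrite /= inordK //; lia.
rewrite (bigD1 (inord i.+1)) //= Uij eq_sym (negbTE i1Ni) inordK // eqxx.
rewrite big1 ?addr0 // => j /andP[ji jNi1]; rewrite Uij eq_sym (negbTE ji).
case: eqP => [ji1 | _]; last by rewrite mul0r.
by case/eqP: jNi1; apply/val_inj; rewrite /= ji1 inordK.
Qed.

Fixpoint lower_shift_prod delta s : 'M[K]_d.+1 :=
  if s is s'.+1 then (lower_bidiag d delta - (delta s')%:M) *m lower_shift_prod delta s'
  else 1%:M.

Fixpoint upper_shift_prod delta phi s : 'M[K]_d.+1 :=
  if s is s'.+1 then
    (upper_bidiag d delta phi - (delta (d - s')%N)%:M) *m upper_shift_prod delta phi s'
  else 1%:M.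

Lemma lower_shift_prod_rows_eq0 delta s (i k : 'I_d.+1) :
  (i < s)%N -> lower_shift_prod delta s i k = 0.
Proof.
elim: s i k => [//|s IH] i k i_lt /=; rewrite mul_lower_bidiag_shift.
have -> : (delta i - delta s) * lower_shift_prod delta s i k = 0.
  have [i_lt_s | ] := ltnP i s; first by rewrite IH ?mulr0.
  by move=> s_le_i; rewrite (_ : (i : nat) = s) ?subrr ?mul0r //; lia.
by rewrite add0r; case: ifP => // i_gt0; rewrite IH // inordK; have := ltn_ord i; lia.
Qed.

Lemma lower_shift_prod_row_supported delta :
  mx_row_supported (lower_shift_prod delta d) ord_max.
Proof.
move=> i k iNd; apply: lower_shift_prod_rows_eq0.
by move: iNd (ltn_ord i); rewrite -val_eqE /=; lia.
Qed.

Lemma lower_shift_prod_col0 delta s (i : 'I_d.+1) : (s <= d)%N ->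
  lower_shift_prod delta s i ord0 = ((i : nat) == s)%:R.
Proof.
elim: s i => [|s IH] i s_le /=; first by rewrite mxE.
have {}IH j := IH j (ltnW s_le).
rewrite mul_lower_bidiag_shift IH.
have [i_s | i_ne] := eqVneq (i : nat) s.
  rewrite i_s subrr mul0r add0r (ltn_eqF (ltnSn s)); case: ifP => // s_gt0.
  by rewrite IH inordK; [rewrite (_ : (s.-1 == s) = false) //; lia | lia].
rewrite mulr0 add0r; case: ifP => [i_gt0 | ].
  by rewrite IH inordK; [congr _%:R; apply/eqP/eqP; lia | have := ltn_ord i; lia].
by move/negbT; rewrite -leqNgt leqn0 => /eqP ->.
Qed.

Lemma lower_shift_prod_col_max delta s (i : 'I_d.+1) :
  lower_shift_prod delta s i ord_max =
    ((i : nat) == d)%:R * \prod_(j < s) (delta d - delta j).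
Proof.
elim: s i => [|s IH] i /=.
  by rewrite mxE big_ord0 mulr1 -val_eqE.
rewrite mul_lower_bidiag_shift IH big_ord_recr /=.
rewrite (_ : (if _ then _ else _) = 0); last first.
  case: ifP => // i_gt0; rewrite IH inordK; last by have := ltn_ord i; lia.
  by rewrite (_ : (i.-1 == d) = false) ?mul0r //; have := ltn_ord i; lia.
by rewrite addr0; case: eqP => [-> | _]; rewrite ?mul0r ?mulr0 // !mul1r mulrC.
Qed.

Lemma upper_shift_prod_rows_eq0 delta phi s (i k : 'I_d.+1) :
  (d < i + s)%N -> upper_shift_prod delta phi s i k = 0.
Proof.
elim: s i k => [|s IH] i k i_gt /=; first by have := ltn_ord i; lia.
rewrite mul_upper_bidiag_shift.
have -> : (delta i - delta (d - s)%N) * upper_shift_prod delta phi s i k = 0.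
  have [d_lt | ] := ltnP d (i + s); first by rewrite IH ?mulr0.
  by move=> is_le; rewrite (_ : (d - s)%N = i) ?subrr ?mul0r //; lia.
by rewrite add0r; case: ifP => // i_lt; rewrite IH ?mulr0 // inordK; lia.
Qed.

Lemma upper_shift_prod_row_supported delta phi :
  mx_row_supported (upper_shift_prod delta phi d) ord0.
Proof.
move=> i k iN0; apply: upper_shift_prod_rows_eq0.
by move: iN0; rewrite -val_eqE /=; lia.
Qed.

Lemma upper_shift_prod_col_max delta phi s (i : 'I_d.+1) : (s <= d)%N ->
  upper_shift_prod delta phi s i ord_max =
    ((i : nat) == (d - s)%N)%:R * \prod_((d.+1 - s)%N <= j < d.+1) phi j.
Proof.
elim: s i => [|s IH] i s_le /=.
  by rewrite mxE subn0 big_geq // mulr1 -val_eqE.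
have {}IH j := IH j (ltnW s_le).
rewrite mul_upper_bidiag_shift IH (big_ltn (_ : (d.+1 - s.+1 < d.+1)%N)); last by lia.
rewrite (_ : ((d.+1 - s.+1).+1 = d.+1 - s)%N); last by lia.
have [i_ds | i_ne] := eqVneq (i : nat) (d - s)%N.
  rewrite i_ds subrr mul0r add0r (_ : (d - s == d - s.+1)%N = false); last by lia.
  case: ifP => [ds_lt | _]; last by rewrite mul0r.
  rewrite IH inordK; last by lia.
  by rewrite (_ : ((d - s).+1 == d - s)%N = false) ?mul0r ?mulr0 //; lia.
rewrite mul0r mulr0 add0r; case: ifP => [i_lt | ].
  rewrite IH inordK //; have [i_ds1 | i_ne1] := eqVneq (i : nat) (d - s.+1)%N.
    rewrite i_ds1 (_ : ((d - s.+1).+1 = d - s)%N); last by lia.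
    by rewrite eqxx subSS !mul1r.
  by rewrite (_ : (i.+1 == d - s)%N = false) ?mul0r ?mulr0 //; lia.
move/negbT; rewrite -leqNgt => d_le.
by rewrite (_ : ((i : nat) == d - s.+1)%N = false) ?mul0r //; lia.
Qed.

Lemma prod_lower_shift theta s : (s <= d)%N ->
  \prod_((d.+1 - s)%N <= j < d.+1)
     (lower_bidiag d (fun i => theta (d - i)%N) - (theta j)%:M) =
  lower_shift_prod (fun i => theta (d - i)%N) s.
Proof.
elim: s => [|s IH] s_le /=; first by rewrite subn0 big_geq.
rewrite (big_ltn (_ : (d.+1 - s.+1 < d.+1)%N)); last by lia.
by rewrite (_ : ((d.+1 - s.+1).+1 = d.+1 - s)%N) ?IH ?subSS ?mulmxE //; lia.
Qed.

Lemma prod_upper_shift theta phi s : (s <= d)%N ->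
  \prod_((d.+1 - s)%N <= j < d.+1) (upper_bidiag d theta phi - (theta j)%:M) =
  upper_shift_prod theta phi s.
Proof.
elim: s => [|s IH] s_le /=; first by rewrite subn0 big_geq.
rewrite (big_ltn (_ : (d.+1 - s.+1 < d.+1)%N)); last by lia.
by rewrite (_ : ((d.+1 - s.+1).+1 = d.+1 - s)%N) ?IH ?subSS ?mulmxE //; lia.
Qed.
End ShiftProducts.

Section PrimitiveIdempotents.
Variables (K : fieldType) (d : nat).
Implicit Types (theta : nat -> K).

Lemma lrmorph_prim_idem (A B : algType K) (g : {lrmorphism A -> B}) a theta i :
  g (prim_idem d a theta i) = prim_idem d (g a) theta i.
Proof.
have gF (k c : K) : g (k *: (a - c%:A)) = k *: (g a - c%:A).
  by rewrite linearZ /= rmorphB; congr (_ *: (_ - _)); exact: rmorph_alg.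
by rewrite rmorph_prod; apply: eq_bigr => j _; exact: gF.
Qed.

Lemma mxtrace_lrmorph_idem_sandwich (A : algType K) n (f : {lrmorphism A -> 'M[K]_n})
    (E Y : A) t :
  E * E = E -> E * Y * E = t *: E -> \tr (f (E * Y)) = t * \tr (f E).
Proof.
move=> EE EYE; rewrite rmorphM; apply: mxtrace_idem_sandwich.
  by rewrite mulmxE -rmorphM EE.
by rewrite !mulmxE -!rmorphM EYE; exact: linearZ.
Qed.

Lemma prim_idem_mxE n (X : 'M[K]_n.+1) theta i :
  prim_idem d X theta i =
    (\prod_(j < d.+1 | (j : nat) != i) (theta i - theta j)^-1) *:
    \prod_(j < d.+1 | (j : nat) != i) (X - (theta j)%:M).
Proof. by rewrite -scaler_prod; apply: eq_bigr => j _; rewrite scalemx1. Qed.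

Lemma eigenvector_mul_prod_shift n (X : 'M[K]_n) (v : 'rV_n) lam
    (I : Type) (r : seq I) (P : pred I) (c : I -> K) :
  v *m X = lam *: v ->
  v *m \prod_(k <- r | P k) (X - (c k)%:M) = (\prod_(k <- r | P k) (lam - c k)) *: v.
Proof.
move=> vX; elim/big_rec2: _ => [|k y M _ IH]; first by rewrite scale1r mulmx1.
by rewrite -mulmxE mulmxA mulmxBr vX mul_mx_scalar -scalerBl -scalemxAl IH scalerA.
Qed.

Section Lagrange.
Variables (X : 'M[K]_d.+1) (theta : nat -> K).
Hypothesis theta_inj : forall i j, (i <= d)%N -> (j <= d)%N -> theta i = theta j -> i = j.

Lemma eigenvector_mul_prim_idem (v : 'rV_d.+1) (i : 'I_d.+1) j :
  v *m X = theta i *: v -> v *m prim_idem d X theta j = ((i : nat) == j)%:R *: v.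
Proof.
move=> vX; rewrite prim_idem_mxE -scalemxAr (eigenvector_mul_prod_shift _ _ _ vX).
rewrite scalerA -big_split /=; congr (_ *: _).
have [<- | ij] := eqVneq (i : nat) j.
  apply: big1 => k ki; rewrite mulVf // subr_eq0; apply: contra ki => /eqP eq_th.
  by rewrite (theta_inj _ _ eq_th) // -ltnS.
by rewrite (bigD1 i) //= subrr mulr0 mul0r.
Qed.

Lemma mxtrace_prim_idem (i : 'I_d.+1) :
  (forall j, (j <= d)%N -> eigenvalue X (theta j)) -> \tr (prim_idem d X theta i) = 1.
Proof.
move=> eig.
have eigv (j : 'I_d.+1) : exists2 w : 'rV_d.+1, w *m X = theta j *: w & w != 0.
  by apply/eigenvalueP/eig; rewrite -ltnS.
have [v vX v_nz] := fin_all_exists2 eigv.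
pose V := \matrix_j v j.
have VE (j k : 'I_d.+1) :
    row j V *m prim_idem d X theta k = (j == k)%:R *: row j V.
  by rewrite rowK (eigenvector_mul_prim_idem _ (vX j)).
have V_unit : V \in unitmx.
  rewrite -row_free_unit; apply/inj_row_free => u uV0; apply/rowP => j.
  have : u *m V *m prim_idem d X theta j = 0 by rewrite uV0 mul0mx.
  rewrite [u *m V]mulmx_sum_row mulmx_suml (bigD1 j) //= big1 => [|k kj]; last first.
    by rewrite -scalemxAl VE (negbTE kj) scale0r scaler0.
  rewrite addr0 -scalemxAl VE eqxx scale1r rowK mxE => /eqP.
  by rewrite scaler_eq0 (negbTE (v_nz j)) orbF => /eqP.
pose D := diag_mx (\row_j (j == i)%:R : 'rV[K]_d.+1).
have -> : prim_idem d X theta i = invmx V *m D *m V.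
  rewrite -mulmxA; apply: (canRL (mulKmx V_unit)); apply/row_matrixP => j.
  by rewrite !row_mul VE row_diag_mx mxE -scalemxAl -rowE.
rewrite mxtrace_mulC mulmxA mulmxV // mul1mx mxtrace_diag (bigD1 i) //= big1.
  by rewrite mxE eqxx addr0.
by move=> j ji; rewrite mxE (negbTE ji).
Qed.
End Lagrange.
End PrimitiveIdempotents.

Section SplitBasisImages.
Variables (K : fieldType) (d : nat) (A : algType K).
Variable g : {lrmorphism A -> 'M[K]_d.+1}.
Implicit Types (theta phi : nat -> K).

Lemma prod_ord_neq0 (M : nzRingType) (F : nat -> M) :
  \prod_(j < d.+1 | (j : nat) != 0%N) F j = \prod_(1 <= j < d.+1) F j.
Proof. by rewrite big_mkcond big_ord_recl /= mul1r big_add1 big_mkord. Qed.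

Lemma prim_idem0_coefE theta :
  \prod_(j < d.+1 | (j : nat) != 0%N) (theta 0%N - theta j)^-1 =
    (eta d theta d (theta 0%N))^-1.
Proof.
rewrite prodfV (prod_ord_neq0 (fun j => theta 0%N - theta j)) /eta big_add1.
rewrite /= big_nat_rev big_mkord; congr _^-1; apply: eq_bigr => h _.
by congr (_ - theta _); have := ltn_ord h; lia.
Qed.

Lemma eta_neq0 theta :
  (forall i j, (i <= d)%N -> (j <= d)%N -> theta i = theta j -> i = j) ->
  eta d theta d (theta 0%N) != 0.
Proof.
move=> theta_inj; apply/prodf_neq0 => h _; rewrite subr_eq0; apply/eqP.
by move=> /(theta_inj _ _ (leq0n d) (leq_subr h d)); have := ltn_ord h; lia.
Qed.

Lemma lrmorph_prim_idem0_lower (a : A) theta :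
  g a = lower_bidiag d (fun i => theta (d - i)%N) ->
  g (prim_idem d a theta 0) =
    (eta d theta d (theta 0%N))^-1 *: lower_shift_prod d (fun i => theta (d - i)%N) d.
Proof.
move=> ga; rewrite lrmorph_prim_idem ga prim_idem_mxE prim_idem0_coefE.
by rewrite -prod_lower_shift // subSnn -prod_ord_neq0.
Qed.

Lemma lrmorph_prim_idem0_upper (a : A) theta phi :
  g a = upper_bidiag d theta phi ->
  g (prim_idem d a theta 0) =
    (eta d theta d (theta 0%N))^-1 *: upper_shift_prod d theta phi d.
Proof.
move=> ga; rewrite lrmorph_prim_idem ga prim_idem_mxE prim_idem0_coefE.
by rewrite -prod_upper_shift // subSnn -prod_ord_neq0.
Qed.
End SplitBasisImages.

Theorem theorem17p9 (K : fieldType) (d : nat) (A : algType K)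
    (f : {lrmorphism A -> 'M[K]_d.+1}) (f_bij : bijective f)
    (a as_ : A) (theta thetas phi : nat -> K) :
  leonard_system f a as_ theta thetas ->
  split_sequence d a as_ (fun i => theta (d - i)%N) thetas phi ->
  (trA f (prim_idem d a theta 0 * prim_idem d as_ thetas 0))^-1 =
    eta d theta d (theta 0%N) * eta d thetas d (thetas 0%N)
      / \prod_(1 <= j < d.+1) phi j.
Proof.
move=> [[eigA theta_inj] [_ thetas_inj] _ _ _] [phi_nz [g [g_bij [ga gas]]]].
set E := prim_idem d a theta 0; set Es := prim_idem d as_ thetas 0.
have gE := lrmorph_prim_idem0_lower ga; have gEs := lrmorph_prim_idem0_upper gas.
have gE_row : mx_row_supported (g E) ord_max.
  by rewrite gE; exact/mx_row_supportedZ/lower_shift_prod_row_supported.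
have gEs_row : mx_row_supported (g Es) ord0.
  by rewrite gEs; exact/mx_row_supportedZ/upper_shift_prod_row_supported.
have g_inj := bij_inj g_bij.
have E_idem : E * E = E.
  apply: g_inj; rewrite rmorphM; apply: mx_row_supported_idem gE_row _.
  by rewrite gE mxE lower_shift_prod_col_max eqxx mul1r subnn mulVf ?eta_neq0.
pose t := g E ord_max ord0 * g Es ord0 ord_max.
have EEsE : E * Es * E = t *: E.
  by apply: g_inj; rewrite linearZ !rmorphM; exact: mx_row_supported_sandwich.
rewrite /trA (mxtrace_lrmorph_idem_sandwich f E_idem EEsE) lrmorph_prim_idem.
rewrite (mxtrace_prim_idem theta_inj ord0 eigA) mulr1 /t gE gEs !mxE /=.
rewrite lower_shift_prod_col0 // upper_shift_prod_col_max // !eqxx subnn subSnn.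
have phis_nz : \prod_(1 <= j < d.+1) phi j != 0.
  by rewrite prodf_seq_neq0; apply/allP => j; rewrite mem_index_iota => /phi_nz ->.
by rewrite !mul1r mulr1; field; rewrite phis_nz !eta_neq0.
Qed.
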